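(* Let $F$ be the elementary cellular automaton with rule number 78. For every nonempty finite word $u\in\{0,1\}^*$, the deterministic communication complexity of $\textsc{SInv}_{F,u}$ restricted to inputs of length $n$ is bounded by a constant independent of $n$.
   Context: An elementary cellular automaton (ECA) with rule number $N\in\{0,\dots,255\}$ is the map $F:\{0,1\}^{\mathbb Z}\to\{0,1\}^{\mathbb Z}$ given by $F(x)_i=f(x_{i-1},x_i,x_{i+1})$. Here the local rule $f:\{0,1\}^3\to\{0,1\}$ is determined by $N=\sum_{a,b,c\in\{0,1\}}2^{4a+2b+c}f(a,b,c)$. For a nonempty finite word $u$, $p_u\in\{0,1\}^{\mathbb Z}$ is defined by $(p_u)_i=u_{i\bmod |u|}$. For a finite word $x$, $p_u[x]$ is the configuration equal to $x$ on positions $0,\dots,|x|-1$ and to $p_u$ elsewhere. $\textsc{SInv}_{F,u}$ is the decision problem: on input a finite word $x$, decide whether there is an integer $w$ such that for all $t\ge0$ the set of positions where $F^t(p_u)$ and $F^t(p_u[x])$ differ is contained in an interval of length $w$. For each $n$, it is regarded as a function $\{0,1\}^n\to\{0,1\}$. For a function $g:X\times Y\to Z$, $D(g)$ is the minimal depth of a deterministic two-party protocol computing $g$. In such a protocol, Alice knows $x$ and Bob knows $y$. The protocol is a binary tree: each internal node is labelled by a function of Alice's input only or of Bob's input only, with values in $\{\text{left},\text{right}\}$, and each leaf is labelled by an output value. For $g:\{0,1\}^m\to Z$, set $D(g)=\max_{0\le i<m}D(g_i)$, where $g_i:\{0,1\}^i\times\{0,1\}^{m-i}\to Z$ is $g_i(x,y)=g(xy)$.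 *)

From Stdlib Require Import ZArith List Arith Bool.
Import ListNotations.
Open Scope Z_scope.

Definition config := Z -> bool.
Definition word := list bool.

Definition local_rule (N : Z) (a b c : bool) : bool :=
  Z.testbit N (4 * Z.b2z a + 2 * Z.b2z b + Z.b2z c).

Definition eca (N : Z) (x : config) : config :=
  fun i => local_rule N (x (i - 1)) (x i) (x (i + 1)).

Definition periodic (u : word) : config :=
  fun i => nth (Z.to_nat (i mod Z.of_nat (length u))) u false.

Definition patch (u x : word) : config :=
  fun i => if andb (0 <=? i) (i <? Z.of_nat (length x))
           then nth (Z.to_nat i) x false else periodic u i.

Definition SInv (N : Z) (u x : word) : Prop :=
  exists w : Z, forall t : nat, exists a : Z, forall i : Z,
    Nat.iter t (eca N) (periodic u) i <> Nat.iter t (eca N) (patch u x) i ->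
    a <= i <= a + w.

(* Deterministic two-party protocols: binary trees whose internal nodes are
   labelled by a function of Alice's input or of Bob's input. *)
Inductive protocol (X Y O : Type) : Type :=
| Leaf : O -> protocol X Y O
| NodeA : (X -> bool) -> protocol X Y O -> protocol X Y O -> protocol X Y O
| NodeB : (Y -> bool) -> protocol X Y O -> protocol X Y O -> protocol X Y O.
Arguments Leaf {X Y O}.
Arguments NodeA {X Y O}.
Arguments NodeB {X Y O}.

Fixpoint run {X Y O} (p : protocol X Y O) (x : X) (y : Y) : O :=
  match p with
  | Leaf o => o
  | NodeA f l r => if f x then run l x y else run r x y
  | NodeB g l r => if g y then run l x y else run r x y
  end.

Fixpoint depth {X Y O} (p : protocol X Y O) : nat :=
  match p with
  | Leaf _ => 0
  | NodeA _ l r | NodeB _ l r => S (Nat.max (depth l) (depth r))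
  end.

(* D(g_i) <= c for the length-n restriction of the decision problem P,
   split after position i: some protocol of depth <= c, Alice holding the
   first i letters and Bob the remaining n - i, outputs true exactly on
   the words in P. *)
Definition split_cc_le (P : word -> Prop) (n i c : nat) : Prop :=
  exists p : protocol word word bool, (depth p <= c)%nat /\
    forall x y : word, length x = i -> length y = (n - i)%nat ->
      (run p x y = true <-> P (x ++ y)).

Definition cc_le (P : word -> Prop) (n c : nat) : Prop :=
  forall i : nat, (i < n)%nat -> split_cc_le P n i c.

(* A wall, i.e. a
   pattern 10 at positions l, l+1, is fixed by F, and the cells on either
   side of it interact only through the wall, so walls split the line into
   independent pieces.  If u is not constant, p_u has walls of
   period |u| on both sides of the patch, so every difference stays between
   two of them and SInv holds for every x.  If u is constant, the background
   is 0 from time 1 on; a perturbation then leaves a wall behind while its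
   leftmost 1 travels left at speed one, so SInv holds iff x is constant
   equal to u.  Either way SInv(xy) is decided by one bit from Alice and one
   bit from Bob. *)
From Stdlib Require Import ZArith List Arith Lia Bool.
Open Scope Z_scope.

Notation F := (eca 78).

Lemma rule78_spec a b c : local_rule 78 a b c = if a then b && negb c else b || c.
Proof. destruct a, b, c; reflexivity. Qed.

Lemma F_spec y i :
  F y i = if y (i - 1) then y i && negb (y (i + 1)) else y i || y (i + 1).
Proof. apply rule78_spec. Qed.

Lemma iter_eca_ext N y z : (forall i, y i = z i) ->
  forall t i, Nat.iter t (eca N) y i = Nat.iter t (eca N) z i.
Proof.
  intros Hyz t; induction t as [|t IH]; intros i; simpl; auto.
  unfold eca; rewrite !IH; reflexivity.
Qed.

Lemma iter_F_zero y : (forall i, y i = false) -> forall t i, Nat.iter t F y i = false.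
Proof.
  intros Hy t; induction t as [|t IH]; intros i; simpl; auto.
  rewrite F_spec, !IH; reflexivity.
Qed.

Lemma wall_step y l : y l = true -> y (l + 1) = false ->
  F y l = true /\ F y (l + 1) = false.
Proof.
  intros Hl Hl1; rewrite !F_spec.
  replace (l + 1 - 1) with l by lia; rewrite Hl, Hl1.
  destruct (y (l - 1)); auto.
Qed.

Lemma wall_persists y l : y l = true -> y (l + 1) = false ->
  forall t, Nat.iter t F y l = true /\ Nat.iter t F y (l + 1) = false.
Proof.
  intros Hl Hl1 t; induction t as [|t [IHl IHl1]]; simpl; auto.
  now apply wall_step.
Qed.

Lemma walls_confine y z l r :
  y l = true -> y (l + 1) = false -> y r = true -> y (r + 1) = false ->
  (forall i, i <= l + 1 \/ r <= i -> y i = z i) ->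
  forall t i, i <= l + 1 \/ r <= i -> Nat.iter t F y i = Nat.iter t F z i.
Proof.
  intros Yl Yl1 Yr Yr1 Hyz.
  assert (Zl : z l = true) by (rewrite <- Hyz by lia; auto).
  assert (Zl1 : z (l + 1) = false) by (rewrite <- Hyz by lia; auto).
  assert (Zr : z r = true) by (rewrite <- Hyz by lia; auto).
  assert (Zr1 : z (r + 1) = false) by (rewrite <- Hyz by lia; auto).
  intros t; induction t as [|t IH]; intros i Hi; [simpl; auto|].
  destruct (Z.eq_dec i (l + 1)) as [->|Hnl].
  { now rewrite (proj2 (wall_persists y l Yl Yl1 (S t))),
                (proj2 (wall_persists z l Zl Zl1 (S t))). }
  destruct (Z.eq_dec i r) as [->|Hnr].
  { now rewrite (proj1 (wall_persists y r Yr Yr1 (S t))),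
                (proj1 (wall_persists z r Zr Zr1 (S t))). }
  simpl; unfold eca; rewrite !IH by lia; reflexivity.
Qed.

Lemma wall_between y j k : j < k -> y j = true -> y k = false ->
  exists m, j <= m < k /\ y m = true /\ y (m + 1) = false.
Proof.
  intros Hjk Hj Hk.
  remember (Z.to_nat (k - j)) as n eqn:En; revert j Hjk Hj En.
  induction n as [|n IH]; intros j Hjk Hj En; [lia|].
  destruct (y (j + 1)) eqn:Hj1.
  - destruct (Z.eq_dec (j + 1) k) as [<-|Hne]; [congruence|].
    destruct (IH (j + 1)) as (m & ? & ?); auto; try lia.
    exists m; split; [lia|auto].
  - exists j; split; [lia|auto].
Qed.

Lemma leftmost_true y b0 m : (forall i, i < b0 -> y i = false) -> y m = true ->
  exists s, y s = true /\ forall i, i < s -> y i = false.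
Proof.
  intros Hlow Hm.
  assert (Hscan : forall n, (exists s, y s = true /\ forall i, i < s -> y i = false)
                            \/ (forall i, i < b0 + Z.of_nat n -> y i = false)).
  { induction n as [|n [IH|IH]]; auto.
    - right; intros i Hi; apply Hlow; lia.
    - destruct (y (b0 + Z.of_nat n)) eqn:E; [left; eauto|].
      right; intros i Hi.
      destruct (Z.eq_dec i (b0 + Z.of_nat n)) as [->|]; auto.
      apply IH; lia. }
  destruct (Hscan (S (Z.to_nat (m - b0)))) as [|Hall]; auto.
  destruct (Z_lt_le_dec m b0); [rewrite Hlow in Hm; auto; discriminate|].
  rewrite Hall in Hm by lia; discriminate.
Qed.

Lemma front_step y s : (forall i, i < s -> y i = false) -> y s = true ->
  (forall i, i < s - 1 -> F y i = false) /\ F y (s - 1) = true.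
Proof.
  intros Hlow Hs; split.
  - intros i Hi; rewrite F_spec, !Hlow by lia; reflexivity.
  - rewrite F_spec; replace (s - 1 + 1) with s by lia.
    rewrite !Hlow by lia; rewrite Hs; reflexivity.
Qed.

Lemma front_iter y s : (forall i, i < s -> y i = false) -> y s = true ->
  forall t, (forall i, i < s - Z.of_nat t -> Nat.iter t F y i = false)
            /\ Nat.iter t F y (s - Z.of_nat t) = true.
Proof.
  intros Hlow Hs t; induction t as [|t [IHlow IHs]].
  - simpl; replace (s - 0) with s by lia; auto.
  - replace (s - Z.of_nat (S t)) with (s - Z.of_nat t - 1) by lia.
    exact (front_step _ _ IHlow IHs).
Qed.

Lemma periodic_add_mul u i k :
  periodic u (i + Z.of_nat (length u) * k) = periodic u i.
Proof. unfold periodic; rewrite (Z.mul_comm _ k), Z_mod_plus_full; reflexivity. Qed.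

Lemma periodic_nth u j : (j < length u)%nat -> periodic u (Z.of_nat j) = nth j u false.
Proof. intros Hj; unfold periodic; rewrite Z.mod_small, Nat2Z.id by lia; reflexivity. Qed.

Lemma periodic_const u b : u <> nil -> (forall v, In v u -> v = b) ->
  forall i, periodic u i = b.
Proof.
  intros Hu Hb i; apply Hb, nth_In.
  destruct u as [|v u]; [congruence|]; simpl length.
  pose proof (Z.mod_pos_bound i (Z.of_nat (S (length u)))); lia.
Qed.

Lemma patch_outside u x i : i < 0 \/ Z.of_nat (length x) <= i -> patch u x i = periodic u i.
Proof.
  intros Hi; unfold patch.
  destruct (0 <=? i) eqn:E1, (i <? Z.of_nat (length x)) eqn:E2; auto.
  apply Z.leb_le in E1; apply Z.ltb_lt in E2; lia.
Qed.

Lemma patch_inside u x j : (j < length x)%nat -> patch u x (Z.of_nat j) = nth j x false.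
Proof.
  intros Hj; unfold patch.
  replace (0 <=? Z.of_nat j) with true by (symmetry; apply Z.leb_le; lia).
  replace (Z.of_nat j <? Z.of_nat (length x)) with true by (symmetry; apply Z.ltb_lt; lia).
  simpl; rewrite Nat2Z.id; reflexivity.
Qed.

Lemma forallb_eqb_In b x : forallb (Bool.eqb b) x = true -> forall v, In v x -> v = b.
Proof.
  rewrite forallb_forall; intros H v Hv; specialize (H v Hv).
  destruct v, b; simpl in *; congruence.
Qed.

Lemma forallb_eqb_false b x : forallb (Bool.eqb b) x = false ->
  exists j, (j < length x)%nat /\ nth j x false = negb b.
Proof.
  induction x as [|a x IH]; simpl; [discriminate|].
  destruct (Bool.eqb b a) eqn:E; simpl; intros H.
  - destruct (IH H) as (j & ? & ?); exists (S j); simpl; split; auto; lia.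
  - exists 0%nat; split; [lia|]; destruct a, b; simpl in *; congruence.
Qed.

Lemma periodic_has_wall u : u <> nil -> forallb (Bool.eqb (hd false u)) u = false ->
  exists m, periodic u m = true /\ periodic u (m + 1) = false.
Proof.
  intros Hu Hnc; destruct (forallb_eqb_false _ _ Hnc) as (j & Hj & Hjv).
  assert (P0 : periodic u 0 = hd false u).
  { destruct u as [|v u]; [congruence|]; apply (periodic_nth (v :: u) 0); simpl; lia. }
  assert (Pn : periodic u (0 + Z.of_nat (length u) * 1) = hd false u)
    by now rewrite periodic_add_mul.
  assert (Pj : periodic u (Z.of_nat j) = negb (hd false u)) by now rewrite periodic_nth.
  assert (Hj0 : j <> 0%nat).
  { intros ->; change (Z.of_nat 0) with 0 in Pj; rewrite P0 in Pj.
    destruct (hd false u); discriminate. }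
  destruct (hd false u) eqn:Eh.
  - destruct (wall_between (periodic u) 0 (Z.of_nat j)) as (m & _ & Hm); eauto; lia.
  - destruct (wall_between (periodic u) (Z.of_nat j) (0 + Z.of_nat (length u) * 1))
      as (m & _ & Hm); eauto; lia.
Qed.

Lemma SInv_nonconst u x : u <> nil -> forallb (Bool.eqb (hd false u)) u = false ->
  SInv 78 u x.
Proof.
  intros Hu Hnc; destruct (periodic_has_wall u Hu Hnc) as (m & Wm & Wm1).
  set (n := Z.of_nat (length u)); set (L := Z.of_nat (length x)).
  assert (Hn : 1 <= n) by (destruct u; [congruence|]; unfold n; simpl length; lia).
  assert (Hwall : forall k, periodic u (m + n * k) = true /\
                            periodic u (m + n * k + 1) = false).
  { intros k; unfold n; rewrite periodic_add_mul.
    replace (m + Z.of_nat (length u) * k + 1) with (m + 1 + Z.of_nat (length u) * k) by lia.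
    rewrite periodic_add_mul; auto. }
  set (l := m + n * (- Z.abs m - 2)); set (r := m + n * (Z.abs m + L)).
  assert (Hl : l + 1 < 0) by (unfold l; nia).
  assert (Hr : L <= r) by (unfold r, L; nia).
  destruct (Hwall (- Z.abs m - 2)) as [Pl Pl1]; destruct (Hwall (Z.abs m + L)) as [Pr Pr1].
  assert (Hout : forall t i, i <= l + 1 \/ r <= i ->
            Nat.iter t F (periodic u) i = Nat.iter t F (patch u x) i).
  { apply walls_confine; auto.
    intros i Hi; symmetry; apply patch_outside; unfold L in *; lia. }
  exists (r - l); intros t; exists l; intros i Hi.
  destruct (Z_le_gt_dec i (l + 1)); [exfalso; apply Hi, Hout; lia|].
  destruct (Z_le_gt_dec r i); [exfalso; apply Hi, Hout; lia|].
  lia.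
Qed.

(* Once the background has died out, a wall stays put while the leftmost 1
   escapes to the left, so the difference set grows without bound. *)
Lemma not_SInv_of_front_and_wall u x t0 b0 m :
  (forall i, Nat.iter t0 F (periodic u) i = false) ->
  (forall i, i < b0 -> Nat.iter t0 F (patch u x) i = false) ->
  Nat.iter t0 F (patch u x) m = true -> Nat.iter t0 F (patch u x) (m + 1) = false ->
  ~ SInv 78 u x.
Proof.
  set (y := Nat.iter t0 F (patch u x)); intros Hbg Hlow Hm Hm1 [w Hw].
  destruct (leftmost_true y b0 m Hlow Hm) as (s & Hs & Hbelow).
  assert (Hsm : s <= m)
    by (destruct (Z_lt_le_dec m s); auto; rewrite Hbelow in Hm; auto; discriminate).
  set (t := S (Z.to_nat (Z.abs w))).
  destruct (Hw (t + t0)%nat) as [a Ha]; rewrite !Nat.iter_add in Ha.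
  assert (Hfront := proj2 (front_iter y s Hbelow Hs t)).
  assert (Hwall := proj1 (wall_persists y m Hm Hm1 t)).
  assert (Hzero := iter_F_zero _ Hbg t).
  assert (a <= s - Z.of_nat t <= a + w)
    by (apply Ha; fold y; rewrite Hfront, Hzero; discriminate).
  assert (a <= m <= a + w) by (apply Ha; fold y; rewrite Hwall, Hzero; discriminate).
  unfold t in *; lia.
Qed.

Lemma not_SInv_const u b x : u <> nil -> (forall v, In v u -> v = b) ->
  forallb (Bool.eqb b) x = false -> ~ SInv 78 u x.
Proof.
  intros Hu Hb Hx; pose proof (periodic_const u b Hu Hb) as Hp.
  destruct (forallb_eqb_false b x Hx) as (j & Hj & Hjv).
  assert (Hpj : patch u x (Z.of_nat j) = negb b) by now rewrite patch_inside.
  destruct b.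
  - (* 1^Z dies at time 1, leaving a wall between cell -1 and the 0 at j *)
    assert (Hp1 : patch u x (-1) = true) by (rewrite patch_outside by lia; auto).
    destruct (wall_between (patch u x) (-1) (Z.of_nat j)) as (m & _ & Wm & Wm1); auto; try lia.
    destruct (wall_step _ _ Wm Wm1) as [Fm Fm1].
    apply (not_SInv_of_front_and_wall u x 1 (-1) m); auto.
    + intros i; simpl; rewrite F_spec, !Hp; reflexivity.
    + intros i Hi; simpl; rewrite F_spec, !patch_outside, !Hp by lia; reflexivity.
  - assert (HpL : patch u x (Z.of_nat (length x)) = false)
      by (rewrite patch_outside by lia; auto).
    destruct (wall_between (patch u x) (Z.of_nat j) (Z.of_nat (length x)))
      as (m & _ & Wm & Wm1); auto; try lia.
    apply (not_SInv_of_front_and_wall u x 0 0 m); auto.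
    intros i Hi; simpl; rewrite patch_outside by lia; auto.
Qed.

Lemma SInv_const_iff u b x : u <> nil -> (forall v, In v u -> v = b) ->
  SInv 78 u x <-> forallb (Bool.eqb b) x = true.
Proof.
  intros Hu Hb; split.
  - intros Hs; destruct (forallb (Bool.eqb b) x) eqn:Hx; auto.
    exfalso; exact (not_SInv_const u b x Hu Hb Hx Hs).
  - intros Hx; exists 0; intros t; exists 0; intros i Hi; exfalso; apply Hi.
    apply iter_eca_ext; intros k.
    destruct (Z_lt_le_dec k 0); [rewrite patch_outside; auto; lia|].
    destruct (Z_lt_le_dec k (Z.of_nat (length x))); [|rewrite patch_outside; auto; lia].
    replace k with (Z.of_nat (Z.to_nat k)) by lia; rewrite patch_inside by lia.
    rewrite (periodic_const u b Hu Hb); symmetry; apply (forallb_eqb_In b x Hx), nth_In; lia.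
Qed.

Theorem mainTheorem7 :
  forall u : list bool, u <> nil ->
    exists c : nat, forall n : nat, cc_le (SInv 78%Z u) n c.
Proof.
  intros u Hu; exists 2%nat; intros n i _.
  set (b := hd false u).
  destruct (forallb (Bool.eqb b) u) eqn:Hconst.
  - exists (NodeA (forallb (Bool.eqb b))
              (NodeB (forallb (Bool.eqb b)) (Leaf true) (Leaf false)) (Leaf false)).
    split; [simpl; lia|]; intros x y _ _.
    rewrite (SInv_const_iff u b (x ++ y) Hu (forallb_eqb_In b u Hconst)), forallb_app.
    simpl; destruct (forallb (Bool.eqb b) x), (forallb (Bool.eqb b) y); simpl; intuition.
  - exists (Leaf true); split; [simpl; lia|]; intros x y _ _.
    simpl; split; auto; intros _; now apply SInv_nonconst.
Qed.
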